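(* Let $\mathbf{Ring}$ be the category of (commutative) unital rings, $\mathbf{Digraph}$ the category of digraphs with regular morphisms, and $\mathbf{Ab}^{\mathrm{gr}}$ the category of graded abelian groups. Then multipath cohomology with constant coefficients \[\mathrm{H}_\mu(-;-)\colon \mathbf{Digraph}^{\mathrm{op}}\times\mathbf{Ring}\to\mathbf{Ab}^{\mathrm{gr}},\qquad({\tt G},R)\mapsto \mathrm{H}^*_\mu({\tt G};R)=\mathrm{H}^*_\mu({\tt G};R,R),\] is a bifunctor.
   Context: A digraph ${\tt G}=(V,E)$ has a finite vertex set $V$ and edge set $E\subseteq (V\times V)\setminus\{(v,v)\}$; a regular morphism is an injective vertex map sending edges to edges. A multipath of ${\tt G}$ is a spanning subgraph (all vertices, a subset of the edges) each of whose connected components (of the underlying undirected graph) is a single vertex or a simple directed path (edges $e_1,\dots,e_k$ with target of $e_i$ equal to source of $e_{i+1}$, no repeated vertex, not a cycle). $P({\tt G})$ is the set of multipaths ordered by inclusion of edge sets; ${\tt H}\prec{\tt H}'$ iff ${\tt H}'$ is obtained from ${\tt H}$ by adding one edge. With constant coefficients $A=M=R$, each multipath contributes $\mathcal F({\tt H})=R^{\otimes(\#\text{components})}\cong R$, and covering maps are multiplications (identity under these identifications). Fix a total order on the vertices; order components of a multipath by minimal vertex; for ${\tt H}\prec{\tt H}\cup e$ let $s,t$ be the indices of the components containing the source and target of $e$, and let $\sigma({\tt H},{\tt H}\cup e)=t+1$ if $t>s$ and $s$ if $s>t$ (mod 2). Then $C^n_\mu({\tt G};R)=\bigoplus_{{\tt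 H}\in P({\tt G}),\#E({\tt H})=n}\mathcal F({\tt H})$ with $d=\sum_{{\tt H}\prec{\tt H}'}(-1)^{\sigma({\tt H},{\tt H}')}\mathcal F({\tt H}\prec{\tt H}')$, and $\mathrm{H}^*_\mu({\tt G};R)$ is its cohomology. A ring homomorphism $f\colon R\to S$ acts via extension of scalars $S\otimes_R(-)$, using $S\otimes_R R^{\otimes k}\cong S$; a regular morphism $\phi\colon{\tt G}'\to{\tt G}$ acts through the cochain map projecting $C_\mu({\tt G};R)$ onto summands indexed by multipaths in the image of $P({\tt G}')$ (edges $\phi(E({\tt H}))$), identified with the summands of $C_\mu({\tt G}';R)$. *)

From HB Require Import structures.
From mathcomp Require Import all_boot all_order all_algebra.
Set Implicit Arguments. Unset Strict Implicit. Unset Printing Implicit Defensive.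
Import GRing.Theory.
Local Open Scope ring_scope.

Record digraph := Digraph {
  vtx : finType;
  edg : {set vtx * vtx};
  edg_noloop : forall v : vtx, (v, v) \notin edg }.

Definition regular (G' G : digraph) (phi : vtx G' -> vtx G) : Prop :=
  injective phi /\ (forall u v, (u, v) \in edg G' -> (phi u, phi v) \in edg G).

(** Multipaths: spanning subgraphs (given by their edge set) whose components
    are isolated vertices or simple directed paths, i.e. in- and out-degrees
    are at most 1 and there is no directed cycle. *)
Definition hrel (V : finType) (H : {set V * V}) : rel V := fun x y => (x, y) \in H.

Definition is_multipath (G : digraph) (H : {set vtx G * vtx G}) : bool :=
  [&& H \subset edg G,
      [forall v, #|[set e in H | e.1 == v]| <= 1]%N,
      [forall v, #|[set e in H | e.2 == v]| <= 1]%N &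
      [forall e in H, ~~ connect (hrel H) e.2 e.1]].

(** Connected components of the underlying undirected graph; the total order
    on vertices is the enumeration order of the finType (enum_rank). *)
Definition uadj (V : finType) (H : {set V * V}) : rel V :=
  fun x y => ((x, y) \in H) || ((y, x) \in H).

Definition cmin (V : finType) (H : {set V * V}) (v : V) : V :=
  [arg min_(x < v | connect (uadj H) v x) (enum_rank x : nat)].

(** index (starting from 1) of the component containing v, components being
    ordered by their minimal vertex *)
Definition cidx (V : finType) (H : {set V * V}) (v : V) : nat :=
  #|[set x : V | (cmin H x == x) && (enum_rank x <= enum_rank (cmin H v))%N]|.

Definition sigma (V : finType) (H : {set V * V}) (e : V * V) : nat :=
  let s := cidx H e.1 in let t := cidx H e.2 in
  if (s < t)%N then t.+1 else s.

(** Cochains: C_mu(G;R) = (+)_{H in P(G)} R, represented as functions on edge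
    sets, vanishing outside multipaths; degree n = multipaths with n edges. *)
Definition cochain (G : digraph) (R : comPzRingType) :=
  {ffun {set vtx G * vtx G} -> R}.

Definition in_degree (G : digraph) (R : comPzRingType) (n : nat)
  (x : cochain G R) : Prop :=
  forall H, ~~ (is_multipath H && (#|H| == n)) -> x H = 0.

Definition mdiff (G : digraph) (R : comPzRingType) (x : cochain G R)
  : cochain G R :=
  [ffun H' => if is_multipath H'
              then \sum_(e in H') (-1) ^+ (sigma (H' :\ e) e) * x (H' :\ e)
              else 0].

Definition cocycle (G : digraph) (R : comPzRingType) (n : nat)
  (x : cochain G R) : Prop :=
  in_degree n x /\ mdiff x = 0.

Definition coboundary (G : digraph) (R : comPzRingType) (n : nat)
  (x : cochain G R) : Prop :=
  if n is m.+1 then exists2 y, in_degree m y & x = mdiff y else x = 0.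

Definition cohom_eq (G : digraph) (R : comPzRingType) (n : nat)
  (x y : cochain G R) : Prop := coboundary n (x - y).

(** Action of a ring homomorphism: extension of scalars S (x)_R -, which on
    each summand S (x)_R R = S is f. *)
Definition mapc (G : digraph) (R S : comPzRingType) (f : R -> S)
  (x : cochain G R) : cochain G S := [ffun H => f (x H)].

Definition img_edges (V' V : finType) (phi : V' -> V) (H : {set V' * V'})
  : {set V * V} := [set (phi e.1, phi e.2) | e in H].

(** Canonical sign correcting the identification of the summand indexed by
    phi(H) in C(G) with the summand indexed by H in C(G'): computed along the
    chain adding the edges of H in enumeration order. *)
Fixpoint eps_aux (V' V : finType) (phi : V' -> V) (H0 : {set V' * V'})
  (s : seq (V' * V')) : nat :=
  match s with
  | [::] => 0
  | e :: s' => sigma H0 e + sigma (img_edges phi H0) (phi e.1, phi e.2)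
               + eps_aux phi (e |: H0) s'
  end%N.

Definition eps (V' V : finType) (phi : V' -> V) (H : {set V' * V'}) : nat :=
  eps_aux phi set0 (enum H).

(** Action of a regular morphism phi : G' -> G: projection of C(G) onto the
    summands indexed by multipaths phi(H), H in P(G'), identified with the
    summands of C(G'). *)
Definition pullc (G' G : digraph) (R : comPzRingType) (phi : vtx G' -> vtx G)
  (x : cochain G R) : cochain G' R :=
  [ffun H => if is_multipath H then (-1) ^+ (eps phi H) * x (img_edges phi H)
             else 0].

Definition bimap (G' G : digraph) (R S : comPzRingType) (phi : vtx G' -> vtx G)
  (f : R -> S) (x : cochain G R) : cochain G' S := pullc phi (mapc f x).

From HB Require Import structures.
From mathcomp Require Import all_boot all_order all_algebra.
Import GRing.Theory.
Local Open Scope ring_scope.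
Set Implicit Arguments. Unset Strict Implicit. Unset Printing Implicit Defensive.

(* Ring homomorphisms act coefficientwise and commute with the differential,
   whose coefficients are signs.  For a regular morphism [phi : G' -> G] the
   projection onto the summands [phi(H)] commutes with the differentials up to
   the discrepancy between [sigma(H, e)] in [G'] and [sigma(phi H, phi e)] in
   [G], which the sign [(-1)^eps(H)] has to absorb.  The point is that this
   discrepancy has the parity of the change, when [e] is added, of the number
   of inversions between two orders on the components of [phi(H)]: by their
   minimal vertex in [G'] (vertices outside the image coming last) and by
   their minimal vertex in [G].  Hence [eps(H)] is, mod 2, the difference of
   these inversion numbers at the empty multipath and at [H], whatever the
   order in which the edges of [H] are added.  This makes the projection a
   cochain map and [eps] additive along composites, so identities and
   composites are preserved already on cochains. *)

Section Inversions.
Local Open Scope nat_scope.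

Lemma eq_odd_sum (I : finType) (P : pred I) (F G : I -> nat) :
  (forall i, P i -> odd (F i) = odd (G i)) ->
  odd (\sum_(i | P i) F i) = odd (\sum_(i | P i) G i).
Proof.
move=> eFG; apply: (big_ind2 (fun a b => odd a = odd b)) => // a b c d e1 e2.
by rewrite !oddD e1 e2.
Qed.

Variable T : finType.
Implicit Types (S : {set T}) (k : T -> nat) (x y c d : T).

Definition rank_in k S x : nat := \sum_(y in S) (k y <= k x).

Definition inversions (k1 k2 : T -> nat) S : nat :=
  \sum_(x in S) \sum_(y in S) ((k1 x < k1 y) && (k2 y < k2 x)).

Lemma rank_inD1 k S x d :
  d \in S -> rank_in k S x = (k d <= k x) + rank_in k (S :\ d) x.
Proof. by move=> dS; rewrite /rank_in (big_setD1 d dS). Qed.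

Lemma rank_in_self k S x : {in S &, injective k} -> x \in S ->
  rank_in k S x = (\sum_(y in S :\ x) (k y < k x)).+1.
Proof.
move=> k_inj xS; rewrite (rank_inD1 _ _ xS) leqnn add1n; congr _.+1.
apply: eq_bigr => y; rewrite in_setD1 => /andP[yx yS]; rewrite leq_eqVlt.
by case: eqP => //= /k_inj-/(_ yS xS) eyx; rewrite eyx eqxx in yx.
Qed.

Lemma rank_in_mono k S x y : y \in S -> k x < k y -> rank_in k S x < rank_in k S y.
Proof.
move=> yS lt_xy; rewrite (rank_inD1 _ x yS) (rank_inD1 _ y yS) leqnn (leqNgt (k y)) lt_xy.
rewrite add0n add1n ltnS; apply: leq_sum => z _.
by case: (k z <= k x) / idP => // le_zx; rewrite (leq_trans le_zx (ltnW lt_xy)).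
Qed.

Lemma rank_in_ltE k S x y : {in S &, injective k} -> x \in S -> y \in S ->
  x != y -> (rank_in k S x < rank_in k S y) = (k x < k y).
Proof.
move=> k_inj xS yS xy; case: (ltngtP (k x) (k y)) => [lt_xy|lt_yx|exy].
- exact: rank_in_mono.
- by apply/negbTE; rewrite -leqNgt ltnW // rank_in_mono.
- by rewrite (k_inj _ _ xS yS exy) eqxx in xy.
Qed.

Lemma eq_inversions (k1 k2 k2' : T -> nat) S :
  {in S, k2 =1 k2'} -> inversions k1 k2 S = inversions k1 k2' S.
Proof. by move=> e; apply: eq_bigr => x xS; apply: eq_bigr => y yS; rewrite !e. Qed.

Lemma inversionsD1 k1 k2 S x : x \in S ->
  inversions k1 k2 S = inversions k1 k2 (S :\ x) +
    \sum_(y in S :\ x) (((k1 x < k1 y) && (k2 y < k2 x)) + ((k1 y < k1 x) && (k2 x < k2 y))).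
Proof.
move=> xS; rewrite /inversions (big_setD1 x xS) (big_setD1 x xS) ltnn /= add0n.
under [X in _ + X]eq_bigr => y /setD1P[_ yS] do rewrite (big_setD1 x xS).
by rewrite big_split addnA addnC -big_split.
Qed.

(* [(x, y)] is inverted iff [y] precedes [x] in exactly one of the rankings. *)
Lemma odd_inversionsD1 k1 k2 S x :
  {in S &, injective k1} -> {in S &, injective k2} -> x \in S ->
  odd (inversions k1 k2 S) =
  odd (inversions k1 k2 (S :\ x)) (+) odd (rank_in k1 S x) (+) odd (rank_in k2 S x).
Proof.
move=> k1_inj k2_inj xS; rewrite (inversionsD1 k1 k2 xS).
rewrite (rank_in_self k1_inj xS) (rank_in_self k2_inj xS) /=.
rewrite oddD (@eq_odd_sum _ _ _ (fun y => (k1 y < k1 x) + (k2 y < k2 x))).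
  by rewrite big_split /= oddD; do 3 case: odd.
move=> y /setD1P[yx yS].
have n1 : k1 y != k1 x by apply: contra yx => /eqP/k1_inj ->.
have n2 : k2 y != k2 x by apply: contra yx => /eqP/k2_inj ->.
by move: n1 n2; case: (ltngtP (k1 x) (k1 y)); case: (ltngtP (k2 x) (k2 y)).
Qed.

Section TwoRankings.
Variables (k1 k2 : T -> nat) (S : {set T}).
Hypotheses (k1_inj : {in S &, injective k1}) (k2_inj : {in S &, injective k2}).

Lemma odd_inversionsD1_relabel x k2' : x \in S -> {in S :\ x, k2 =1 k2'} ->
  odd (inversions k1 k2 S) (+) odd (inversions k1 k2' (S :\ x)) =
  odd (rank_in k1 S x) (+) odd (rank_in k2 S x).
Proof.
move=> xS e; rewrite (odd_inversionsD1 k1_inj k2_inj xS) -(eq_inversions _ e).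
by do 3 case: odd.
Qed.

(* The relabelled [c] takes in [S :\ d] the [k2]-position that [d] had in [S]. *)
Lemma odd_inversionsD1_transfer c d k2' : c \in S -> d \in S -> d != c ->
  k2 d < k2 c -> k2' c = k2 d -> {in S, forall t, t != d -> t != c -> k2' t = k2 t} ->
  odd (inversions k1 k2 S) (+) odd (inversions k1 k2' (S :\ d)) =
  odd (rank_in k1 S d) (+) ~~ odd (rank_in k2 S c).
Proof.
move=> cS dS dc lt_dc ec e.
have sub : S :\ d \subset S by apply: subsetDl.
have cSd : c \in S :\ d by rewrite in_setD1 eq_sym dc.
have k1_injD := sub_in2 (subsetP sub) k1_inj; have k2_injD := sub_in2 (subsetP sub) k2_inj.
have k2'_injD : {in S :\ d &, injective k2'}.
  move=> x y /setD1P[xd xS] /setD1P[yd yS].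
  case: (eqVneq x c) => [->|xc]; case: (eqVneq y c) => [->|yc] //.
  - by rewrite ec e // => /k2_inj-/(_ dS yS) eyd; rewrite eyd eqxx in yd.
  - by rewrite ec e // => /esym/k2_inj-/(_ dS xS) exd; rewrite exd eqxx in xd.
  by rewrite !e //; apply: k2_inj.
rewrite (odd_inversionsD1 k1_inj k2_inj dS) (odd_inversionsD1 k1_injD k2_injD cSd).
rewrite (odd_inversionsD1 k1_injD k2'_injD cSd).
have -> : inversions k1 k2' ((S :\ d) :\ c) = inversions k1 k2 ((S :\ d) :\ c).
  by apply: eq_inversions => t /setD1P[tc /setD1P[td tS]]; rewrite e.
have -> : rank_in k2' (S :\ d) c = rank_in k2 S d.
  rewrite (rank_inD1 _ _ cSd) (rank_inD1 _ _ dS) ec leqnn; congr (_ + _).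
  rewrite (rank_inD1 _ _ cSd) leqNgt lt_dc add0n; apply: eq_bigr => t.
  by move=> /setD1P[tc /setD1P[td tS]]; rewrite ec e.
have -> : rank_in k2 S c = (rank_in k2 (S :\ d) c).+1.
  by rewrite (rank_inD1 _ _ dS) (ltnW lt_dc).
by rewrite /=; do 5 case: odd.
Qed.

Definition merge_sign (s t : nat) : nat := if s < t then t.+1 else s.

(* This is what happens to the components of [u] and [w] when the edge [(u, w)]
   is added: the merged component keeps the smaller minimal vertex, both for
   the order of [G'] ([k1]) and for the order of [G] ([k2]). *)
Lemma odd_inversions_merge a b k2' : a \in S -> b \in S -> a != b ->
  k2' (if k1 a < k1 b then a else b) = minn (k2 a) (k2 b) ->
  {in S, forall t, t != a -> t != b -> k2' t = k2 t} ->
  odd (inversions k1 k2 S) (+)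
  odd (inversions k1 k2' (S :\ (if k1 a < k1 b then b else a))) =
  odd (merge_sign (rank_in k1 S a) (rank_in k1 S b)) (+)
  odd (merge_sign (rank_in k2 S a) (rank_in k2 S b)).
Proof.
move=> aS bS ab e_surv e.
have ba : b != a by rewrite eq_sym.
have n1 : k1 a != k1 b by apply: contra ab => /eqP/k1_inj ->.
have n2 : k2 a != k2 b by apply: contra ab => /eqP/k2_inj ->.
rewrite /merge_sign (rank_in_ltE k1_inj aS bS ab) (rank_in_ltE k2_inj aS bS ab).
move: e_surv; rewrite /minn.
case: (ltngtP (k1 a) (k1 b)) n1 => // lt1 _; case: (ltngtP (k2 a) (k2 b)) n2 => // lt2 _ e_surv /=.
- rewrite (odd_inversionsD1_relabel bS); first by do 2 case: odd.
  move=> t /setD1P[tb tS]; case: (eqVneq t a) => [->|ta]; first by rewrite e_surv.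
  by rewrite e.
- rewrite (odd_inversionsD1_transfer aS bS ba lt2 e_surv); first by do 2 case: odd.
  by move=> t tS tb ta; rewrite e.
- rewrite (odd_inversionsD1_transfer bS aS ab lt2 e_surv); first by do 2 case: odd.
  by move=> t tS ta tb; rewrite e.
- rewrite (odd_inversionsD1_relabel aS) //.
  move=> t /setD1P[ta tS]; case: (eqVneq t b) => [->|tb]; first by rewrite e_surv.
  by rewrite e.
Qed.

End TwoRankings.
End Inversions.

Section Components.
Local Open Scope nat_scope.

Lemma connect_preorder (V : finType) (e : rel V) (R : V -> V -> Prop) :
  (forall x, R x x) -> (forall x y z, R x y -> R y z -> R x z) ->
  (forall x y, e x y -> R x y) -> forall x y, connect e x y -> R x y.
Proof.
move=> Rxx Rtr Re x y /connectP[p]; elim: p x => [|z p IHp] x /=; first by move=> _ ->.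
by move=> /andP[exz pz] ly; apply: Rtr (Re _ _ exz) (IHp z pz ly).
Qed.

Definition vrank (V : finType) (x : V) : nat := enum_rank x.

Lemma vrank_inj (V : finType) : injective (@vrank V).
Proof. by move=> x y /val_inj/enum_rank_inj. Qed.

Lemma vrank_lt (V : finType) (x : V) : vrank x < #|V|.
Proof. exact: ltn_ord. Qed.

Variable V : finType.
Implicit Types (H : {set V * V}) (x y z u w : V).

Definition linked H x y : bool := connect (uadj H) x y.
Definition is_root H x : bool := cmin H x == x.

Lemma linked_refl H x : linked H x x.
Proof. exact: connect0. Qed.

Lemma linked_sym H x y : linked H x y = linked H y x.
Proof. by apply: sym_connect_sym => a b; rewrite /uadj orbC. Qed.

Lemma linked_trans H y x z : linked H x y -> linked H y z -> linked H x z.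
Proof. exact: connect_trans. Qed.

Lemma linked_sub H H' x y : H \subset H' -> linked H x y -> linked H' x y.
Proof.
move=> sHH'; apply: connect_sub => a b /orP[] ab; apply: connect1;
  by rewrite /uadj (subsetP sHH' _ ab) ?orbT.
Qed.

Lemma cminP H x :
  linked H x (cmin H x) /\ (forall y, linked H x y -> vrank (cmin H x) <= vrank y).
Proof.
rewrite /cmin; case: arg_minnP; first exact: connect0.
by move=> m xm m_min; split=> // y; apply: m_min.
Qed.

Lemma cmin_linked H x : linked H x (cmin H x).
Proof. by case: (cminP H x). Qed.

Lemma cmin_unique H x m :
  linked H x m -> (forall y, linked H x y -> vrank m <= vrank y) -> cmin H x = m.
Proof.
move=> xm m_min; have [_ c_min] := cminP H x.
by apply: vrank_inj; apply/eqP; rewrite eqn_leq c_min ?m_min ?cmin_linked.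
Qed.

Lemma cmin_eq H x y : linked H x y -> cmin H x = cmin H y.
Proof.
move=> xy; have [yc c_min] := cminP H y; apply: cmin_unique; first exact: linked_trans yc.
by move=> z xz; apply: c_min; apply: linked_trans xz; rewrite linked_sym.
Qed.

Lemma linked_cminE H x y : linked H x y = (cmin H x == cmin H y).
Proof.
apply/idP/eqP; first exact: cmin_eq.
by move=> e; apply: linked_trans (cmin_linked H x) _; rewrite e linked_sym cmin_linked.
Qed.

Lemma is_root_cmin H x : is_root H (cmin H x).
Proof. by apply/eqP/cmin_eq; rewrite linked_sym cmin_linked. Qed.

Section AddEdge.
Variables (H : {set V * V}) (u w : V).
Hypothesis unlinked_uw : ~~ linked H u w.

Let H' := (u, w) |: H.
Let label z := if linked H z w then cmin H u else cmin H z.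

Lemma linked_setU1 x y : linked H' x y = (label x == label y).
Proof.
have sHH' : H \subset H' by apply/subsetP => e eH; rewrite in_setU1 eH orbT.
have label_linked a b : linked H a b -> label a = label b.
  move=> ab; rewrite /label (cmin_eq ab).
  case: (linked H a w) / idP => aw; case: (linked H b w) / idP => bw //.
  - by case: bw; apply: linked_trans aw; rewrite linked_sym.
  - by case: aw; apply: linked_trans bw.
apply/idP/idP.
  move=> xy; apply/eqP; move: xy.
  apply: (@connect_preorder _ _ (fun x y => label x = label y)) => // [a b c -> -> //|].
  move=> a b; rewrite /uadj !in_setU1.
  case/orP=> [/orP[/eqP[-> ->]|ab]|/orP[/eqP[-> ->]|ba]].
  - by rewrite /label (negbTE unlinked_uw) linked_refl.
  - by apply: label_linked; apply: connect1; rewrite /uadj ab.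
  - by rewrite /label (negbTE unlinked_uw) linked_refl.
  - by apply: label_linked; apply: connect1; rewrite /uadj ba orbT.
have uw : linked H' u w by apply: connect1; rewrite /uadj setU11.
rewrite /label; case: (linked H x w) / idP => xw; case: (linked H y w) / idP => yw /eqP e.
- by apply: (linked_sub sHH'); apply: linked_trans xw _; rewrite linked_sym.
- apply: (linked_trans (linked_sub sHH' xw)); apply: (@linked_trans _ u).
    by rewrite linked_sym.
  by apply: (linked_sub sHH'); rewrite linked_cminE e.
- apply: (@linked_trans _ u); first by apply: (linked_sub sHH'); rewrite linked_cminE e.
  by apply: (linked_trans uw); apply: (linked_sub sHH'); rewrite linked_sym.
- by apply: (linked_sub sHH'); rewrite linked_cminE e.
Qed.

Local Notation cu := (cmin H u).
Local Notation cw := (cmin H w).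

Lemma cmin_setU1 x : cmin H' x =
  if linked H x u || linked H x w then (if vrank cu < vrank cw then cu else cw)
  else cmin H x.
Proof.
have [uc cu_min] := cminP H u; have [wc cw_min] := cminP H w.
have label_uw z : linked H z u || linked H z w -> label z = cu.
  case/orP=> zl; rewrite /label; case: (linked H z w) / idP => // zw; exact: cmin_eq.
case: ifP => xuw.
  apply: cmin_unique.
    rewrite linked_setU1 label_uw //; case: ifP => _; apply/eqP/esym/label_uw.
      by rewrite linked_sym uc.
    by rewrite [linked H _ w]linked_sym wc orbT.
  move=> y; rewrite linked_setU1 label_uw // /label; case: (linked H y w) / idP => yw e.
    apply: leq_trans (cw_min _ _); first by case: ifP => // /ltnW.
    by rewrite linked_sym.
  apply: leq_trans (cu_min _ _); first by case: ifP => // /negbT; rewrite -leqNgt.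
  by rewrite linked_cminE e.
have [xc cx_min] := cminP H x.
have xw : ~~ linked H x w by apply: contraFN xuw => ->; rewrite orbT.
have xu : ~~ linked H x u by apply: contraFN xuw => ->.
have label_x : label x = cmin H x by rewrite /label (negbTE xw).
apply: cmin_unique.
  have xcw : linked H (cmin H x) w = false.
    by apply/negbTE; apply: contra xw; apply: linked_trans xc.
  by rewrite linked_setU1 label_x /label xcw; apply/eqP/esym/cmin_eq; rewrite linked_sym.
move=> y; rewrite linked_setU1 label_x /label; case: (linked H y w) / idP => yw e.
  by case/negP: xu; rewrite linked_cminE e.
by apply: cx_min; rewrite linked_cminE e.
Qed.

Lemma is_root_setU1 x :
  is_root H' x = is_root H x && (x != if vrank cu < vrank cw then cw else cu).
Proof.
have cu_cw : cu != cw by rewrite -linked_cminE.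
have cw_cu : cw != cu by rewrite eq_sym.
rewrite /is_root cmin_setU1; case: ifP => xuw.
  have [->|/eqP xcu] := x =P cu; last have [->|/eqP xcw] := x =P cw.
  - by rewrite (eqP (is_root_cmin H u)); case: ifP; rewrite eqxx ?(negbTE cw_cu).
  - by rewrite (eqP (is_root_cmin H w)); case: ifP; rewrite eqxx ?(negbTE cu_cw).
  have : cmin H x = cu \/ cmin H x = cw by case/orP: xuw => /cmin_eq ->; [left|right].
  by case=> ->; case: ifP; rewrite ![_ == x]eq_sym (negbTE xcu) (negbTE xcw).
have xcu : x != cu.
  by apply: contraFN xuw => /eqP->; rewrite linked_sym cmin_linked.
have xcw : x != cw.
  by apply: contraFN xuw => /eqP->; rewrite [linked H _ w]linked_sym cmin_linked orbT.
by case: ifP; rewrite ?xcu ?xcw andbT.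
Qed.

End AddEdge.
End Components.

Section EdgeImage.
Variables (V' V : finType) (phi : V' -> V).

Definition edge_map (e : V' * V') : V * V := (phi e.1, phi e.2).

Lemma img_edgesE (H : {set V' * V'}) : img_edges phi H = edge_map @: H.
Proof. by []. Qed.

Lemma img_edges0 : img_edges phi set0 = set0.
Proof. exact: imset0. Qed.

Lemma img_edgesU1 e (H : {set V' * V'}) :
  img_edges phi (e |: H) = edge_map e |: img_edges phi H.
Proof. exact: imsetU1. Qed.

Hypothesis phi_inj : injective phi.

Lemma edge_map_inj : injective edge_map.
Proof. by case=> a b [c d] [/phi_inj-> /phi_inj->]. Qed.

Lemma mem_img_edges (H : {set V' * V'}) a b :
  ((phi a, phi b) \in img_edges phi H) = ((a, b) \in H).
Proof. by rewrite -(mem_imset _ _ edge_map_inj). Qed.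

Lemma img_edgesD1 (H : {set V' * V'}) e :
  img_edges phi (H :\ e) = img_edges phi H :\ edge_map e.
Proof.
apply/setP => f; rewrite in_setD1; apply/imsetP/andP => [[g /setD1P[ge gH] ->]|].
  by rewrite (inj_eq edge_map_inj) ge imset_f.
case=> fe /imsetP[g gH efg]; exists g => //; rewrite in_setD1 gH andbT.
by rewrite -(inj_eq edge_map_inj); apply: contra fe => /eqP <-; apply/eqP.
Qed.

Lemma card_img_edges (H : {set V' * V'}) : #|img_edges phi H| = #|H|.
Proof. exact: card_imset edge_map_inj. Qed.

Lemma connect_img (r : rel V') (r' : rel V) :
  (forall p q, r' p q -> exists a b, [/\ p = phi a, q = phi b & r a b]) ->
  forall p q, connect r' p q ->
  p = q \/ exists a b, [/\ p = phi a, q = phi b & connect r a b].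
Proof.
move=> r'_img; apply: connect_preorder => [p|p q s|p q].
- by left.
- case=> [<-|[a [b [-> -> ab]]]] //; case=> [<-|[c [d [/phi_inj eac -> cd]]]].
    by right; exists a, b.
  by right; exists a, d; split=> //; apply: connect_trans ab _; rewrite eac.
by case/r'_img=> a [b [-> -> ab]]; right; exists a, b; split=> //; apply: connect1.
Qed.

Lemma uadj_img (H : {set V' * V'}) p q : uadj (img_edges phi H) p q ->
  exists a b, [/\ p = phi a, q = phi b & uadj H a b].
Proof.
by case/orP=> /imsetP[[a b] ab [-> ->]]; [exists a, b | exists b, a];
  rewrite /uadj ab ?orbT.
Qed.

Lemma linked_img (H : {set V' * V'}) x y :
  linked (img_edges phi H) (phi x) (phi y) = linked H x y.
Proof.
apply/idP/idP.
  case/(connect_img (@uadj_img H)) => [/phi_inj->|[a [b [/phi_inj-> /phi_inj-> //]]]].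
  exact: linked_refl.
apply: (@connect_preorder _ _ (fun a b => linked (img_edges phi H) (phi a) (phi b))).
- by move=> a; apply: linked_refl.
- by move=> a b c; apply: linked_trans.
by move=> a b ab; apply: connect1; rewrite /uadj !mem_img_edges.
Qed.

Lemma linked_img_out (H : {set V' * V'}) z y :
  z \notin codom phi -> linked (img_edges phi H) z y -> z = y.
Proof.
move=> z_out /(connect_img (@uadj_img H)) [//|[a [b [eza _ _]]]].
by case/negP: z_out; rewrite eza codom_f.
Qed.

Lemma connect_hrel_img (H : {set V' * V'}) x y :
  connect (hrel (img_edges phi H)) (phi x) (phi y) -> connect (hrel H) x y.
Proof.
have hrel_img p q : hrel (img_edges phi H) p q ->
    exists a b, [/\ p = phi a, q = phi b & hrel H a b].
  by case/imsetP=> [[a b] ab [-> ->]]; exists a, b.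
case/(connect_img hrel_img) => [/phi_inj->|[a [b [/phi_inj-> /phi_inj-> //]]]].
exact: connect0.
Qed.

End EdgeImage.

Lemma img_edges_comp (V1 V2 V3 : finType) (phi : V1 -> V2) (psi : V2 -> V3)
  (H : {set V1 * V1}) :
  img_edges (psi \o phi) H = img_edges psi (img_edges phi H).
Proof. by rewrite /img_edges -imset_comp. Qed.

Lemma img_edges_id (V : finType) (H : {set V * V}) : img_edges id H = H.
Proof. by rewrite /img_edges -[RHS]imset_id; apply: eq_imset => -[]. Qed.

Section LinearForest.
Local Open Scope nat_scope.
Variable V : finType.
Implicit Types (H : {set V * V}) (a b c u v w x y : V).

Definition linear_forest H : bool :=
  [&& [forall v, #|[set e in H | e.1 == v]| <= 1],
      [forall v, #|[set e in H | e.2 == v]| <= 1] &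
      [forall e in H, ~~ connect (hrel H) e.2 e.1]].

Lemma linear_forest_out H v a b :
  linear_forest H -> (v, a) \in H -> (v, b) \in H -> a = b.
Proof.
case/and3P=> /forallP/(_ v)/card_le1_eqP out_v _ _ va vb.
by have := out_v (v, b) (v, a); rewrite !inE va vb eqxx => /(_ isT isT) [->].
Qed.

Lemma linear_forest_in H v a b :
  linear_forest H -> (a, v) \in H -> (b, v) \in H -> a = b.
Proof.
case/and3P=> _ /forallP/(_ v)/card_le1_eqP in_v _ av bv.
by have := in_v (b, v) (a, v); rewrite !inE av bv eqxx => /(_ isT isT) [->].
Qed.

Lemma connect_hrel_sub H1 H2 x y :
  H1 \subset H2 -> connect (hrel H1) x y -> connect (hrel H2) x y.
Proof. by move=> sH12; apply: connect_sub => a b ab; apply: connect1; apply: (subsetP sH12). Qed.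

Lemma linear_forest_sub H1 H2 : H1 \subset H2 -> linear_forest H2 -> linear_forest H1.
Proof.
move=> sH12 /and3P[/forallP out1 /forallP in1 /forall_inP acyc]; apply/and3P; split.
- apply/forallP => v; apply: leq_trans (out1 v); apply/subset_leq_card/subsetP => e.
  by rewrite !inE => /andP[/(subsetP sH12)-> ->].
- apply/forallP => v; apply: leq_trans (in1 v); apply/subset_leq_card/subsetP => e.
  by rewrite !inE => /andP[/(subsetP sH12)-> ->].
- apply/forall_inP => e eH; apply: contra (acyc e (subsetP sH12 _ eH)).
  exact: connect_hrel_sub.
Qed.

Lemma connect_first (e : rel V) x y :
  connect e x y -> x = y \/ exists2 z, e x z & connect e z y.
Proof.
case/connectP=> [[|z p]] /=; first by move=> _ ->; left.
by case/andP=> xz zp ->; right; exists z => //; apply/connectP; exists p.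
Qed.

Lemma connect_last (e : rel V) x y :
  connect e x y -> x = y \/ exists2 z, connect e x z & e z y.
Proof.
case/connectP=> p; case/lastP: p => [|p z] /=; first by move=> _ ->; left.
rewrite rcons_path last_rcons => /andP[xp pz] ->; right; exists (last x p) => //.
by apply/connectP; exists p.
Qed.

Lemma linked_directed H x y : linear_forest H ->
  linked H x y -> connect (hrel H) x y || connect (hrel H) y x.
Proof.
move=> lfH /connectP[p]; elim: p x => [|z p IHp] x /=; first by move=> _ ->; rewrite connect0.
case/andP=> /orP[xz|zx] zp ly; case/orP: (IHp z zp ly) => zy.
- by rewrite (connect_trans (connect1 xz) zy).
- case: (connect_last zy) => [->|[c yc cz]]; first by rewrite connect1.
  by rewrite (linear_forest_in lfH xz cz) yc orbT.
- case: (connect_first zy) => [<-|[c zc cy]]; first by rewrite (connect1 (e := hrel H) zx) orbT.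
  by rewrite (linear_forest_out lfH zx zc) cy.
- by rewrite (connect_trans zy (connect1 zx)) orbT.
Qed.

Lemma linear_forest_setU1_unlinked H u w :
  linear_forest ((u, w) |: H) -> (u, w) \notin H -> ~~ linked H u w.
Proof.
move=> lfHuw uwNH; have sH : H \subset (u, w) |: H by apply/subsetP => e eH; rewrite setU1r.
have lfH := linear_forest_sub sH lfHuw.
have wNu : ~~ connect (hrel ((u, w) |: H)) w u.
  by case/and3P: lfHuw => _ _ /forall_inP/(_ (u, w) (setU11 _ _)).
apply/negP => /(linked_directed lfH)/orP[] uw; last by case/negP: wNu; apply: connect_hrel_sub uw.
case: (connect_first uw) => [ew|[c uc cw]]; first by case/negP: wNu; rewrite ew connect0.
have ucH : (u, c) \in (u, w) |: H by rewrite setU1r.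
by move: uc; rewrite /hrel (linear_forest_out lfHuw ucH (setU11 _ _)) (negbTE uwNH).
Qed.

End LinearForest.

Lemma is_multipathE (G : digraph) (H : {set vtx G * vtx G}) :
  is_multipath H = (H \subset edg G) && linear_forest H.
Proof. by []. Qed.

Lemma multipath_linear_forest (G : digraph) (H : {set vtx G * vtx G}) :
  is_multipath H -> linear_forest H.
Proof. by rewrite is_multipathE => /andP[]. Qed.

Lemma multipathD1 (G : digraph) (H : {set vtx G * vtx G}) e :
  is_multipath H -> is_multipath (H :\ e).
Proof.
rewrite !is_multipathE => /andP[sHG lfH]; have sH := subsetDl H [set e].
by rewrite (subset_trans sH sHG) (linear_forest_sub sH lfH).
Qed.

Lemma linear_forest_img (V' V : finType) (phi : V' -> V) (H : {set V' * V'}) :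
  injective phi -> linear_forest H -> linear_forest (img_edges phi H).
Proof.
move=> phi_inj lfH; apply/and3P; split.
- apply/forallP => v; apply/card_le1_eqP => e1 e2 /setIdP[/imsetP[[a b] ab ->] /eqP/= av].
  case/setIdP=> /imsetP[[c d] cd ->] /eqP/= cv.
  have eca : c = a by apply: phi_inj; rewrite av cv.
  by rewrite eca in cd *; rewrite (linear_forest_out lfH ab cd).
- apply/forallP => v; apply/card_le1_eqP => e1 e2 /setIdP[/imsetP[[a b] ab ->] /eqP/= bv].
  case/setIdP=> /imsetP[[c d] cd ->] /eqP/= dv.
  have edb : d = b by apply: phi_inj; rewrite bv dv.
  by rewrite edb in cd *; rewrite (linear_forest_in lfH ab cd).
apply/forall_inP => _ /imsetP[[a b] ab ->] /=.
apply/negP => /(connect_hrel_img phi_inj) ba.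
by case/and3P: lfH => _ _ /forall_inP/(_ _ ab)/=; rewrite ba.
Qed.

Lemma multipath_img (G' G : digraph) (phi : vtx G' -> vtx G) (H : {set vtx G' * vtx G'}) :
  regular phi -> is_multipath H -> is_multipath (img_edges phi H).
Proof.
case=> phi_inj phi_edg; rewrite !is_multipathE => /andP[sHG lfH].
rewrite linear_forest_img // andbT; apply/subsetP => _ /imsetP[[a b] ab ->].
exact/phi_edg/(subsetP sHG).
Qed.

Lemma sigmaE (V : finType) (H : {set V * V}) e :
  sigma H e = merge_sign (cidx H e.1) (cidx H e.2).
Proof. by []. Qed.

Section ComponentInversions.
Local Open Scope nat_scope.
Variables (V' V : finType) (phi : V' -> V).
Hypothesis phi_inj : injective phi.
Local Notation K H := (img_edges phi H).
Implicit Types (H : {set V' * V'}) (u w x y : V').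

(* The components of [K H] are the images of the components of [H] and the
   vertices outside the image of [phi]: they are indexed by [V' + V] and
   compared in two ways, by their index (the order of [G'], with [V] placed
   after [V']) and by their minimal vertex in [V] (the order of [G]). *)
Definition comp_roots H : {set V' + V} :=
  [set t | match t with inl x => is_root H x | inr z => z \notin codom phi end].

Definition comp_min H (t : V' + V) : V :=
  match t with inl x => cmin (K H) (phi x) | inr z => z end.

Definition src_rank (t : V' + V) : nat :=
  match t with inl x => vrank x | inr z => #|V'| + vrank z end.

Definition tgt_rank H (t : V' + V) : nat := vrank (comp_min H t).

Definition comp_inversions H : nat := inversions src_rank (tgt_rank H) (comp_roots H).

Lemma src_rank_inj : injective src_rank.
Proof.
have lt_rank (x : V') (z : V) : vrank x < #|V'| + vrank z.
  exact: leq_trans (vrank_lt x) (leq_addr _ _).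
case=> [x|z] [y|z'] /= e.
- by rewrite (vrank_inj e).
- by have := lt_rank x z'; rewrite e ltnn.
- by have := lt_rank y z; rewrite e ltnn.
- by rewrite (vrank_inj (addnI e)).
Qed.

Lemma comp_min_inl H u : comp_min H (inl (cmin H u)) = cmin (K H) (phi u).
Proof. by apply: cmin_eq; rewrite linked_img // linked_sym cmin_linked. Qed.

Lemma comp_min_inj H : {in comp_roots H &, injective (comp_min H)}.
Proof.
have isolated H' x z : z \notin codom phi -> cmin (K H') (phi x) <> z.
  move=> zNphi exz; have := cmin_linked (K H') (phi x); rewrite exz linked_sym.
  by move/(linked_img_out phi_inj zNphi) => ez; case/negP: zNphi; rewrite ez codom_f.
move=> [x|z] [y|z']; rewrite !inE //= => rx ry.
- move=> e; have : linked (K H) (phi x) (phi y) by rewrite linked_cminE e.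
  by rewrite linked_img // linked_cminE (eqP rx) (eqP ry) => /eqP->.
- by move/isolated.
- by move/esym/isolated.
by move->.
Qed.

Lemma tgt_rank_inj H : {in comp_roots H &, injective (tgt_rank H)}.
Proof. by move=> s t sS tS /vrank_inj; apply: comp_min_inj. Qed.

Lemma comp_min_roots H : comp_min H @: comp_roots H = [set z | is_root (K H) z].
Proof.
apply/setP => z; rewrite inE; apply/imsetP/idP => [[[x|z']] /[!inE] /= rt ->|rz].
- exact: is_root_cmin.
- apply/eqP/cmin_unique; first exact: linked_refl.
  by move=> y /(linked_img_out phi_inj rt) ->.
have [/codomP[y ezy]|zNphi] := boolP (z \in codom phi); last by exists (inr z); rewrite ?inE.
exists (inl (cmin H y)); first by rewrite inE /= is_root_cmin.
by rewrite comp_min_inl -ezy (eqP rz).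
Qed.

Lemma cidx_src_rank H u :
  cidx H u = rank_in src_rank (comp_roots H) (inl (cmin H u)).
Proof.
rewrite /cidx -sum1dep_card /rank_in [RHS]big_mkcond big_sumType /=.
rewrite [X in _ = _ + X]big1 ?addn0 => [|z _]; last first.
  by case: ifP => // _; rewrite leqNgt (leq_trans (vrank_lt _) (leq_addr _ _)).
rewrite big_mkcond; apply: eq_bigr => y _; rewrite inE /is_root.
by case: (cmin H y == y).
Qed.

Lemma cidx_tgt_rank H u :
  cidx (K H) (phi u) = rank_in (tgt_rank H) (comp_roots H) (inl (cmin H u)).
Proof.
rewrite /rank_in /tgt_rank comp_min_inl.
rewrite -(big_imset (fun z => nat_of_bool (vrank z <= vrank (cmin (K H) (phi u))))
  (@comp_min_inj H)).
rewrite comp_min_roots /cidx -sum1dep_card big_mkcond [RHS]big_mkcond /=.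
by apply: eq_bigr => z _; rewrite inE /is_root; case: (_ == z).
Qed.

Lemma odd_sigma_img H u w : ~~ linked H u w ->
  odd (sigma H (u, w)) (+) odd (sigma (K H) (phi u, phi w)) =
  odd (comp_inversions H) (+) odd (comp_inversions ((u, w) |: H)).
Proof.
move=> uNw; have uNw_K : ~~ linked (K H) (phi u) (phi w) by rewrite linked_img.
have KU : K ((u, w) |: H) = (phi u, phi w) |: K H by rewrite img_edgesU1.
set a : V' + V := inl (cmin H u); set b : V' + V := inl (cmin H w).
have aS : a \in comp_roots H by rewrite /a inE is_root_cmin.
have bS : b \in comp_roots H by rewrite /b inE is_root_cmin.
have ab : a != b by apply/eqP => -[/eqP]; rewrite -linked_cminE (negbTE uNw).
have rootsU : comp_roots ((u, w) |: H) =
    comp_roots H :\ (if src_rank a < src_rank b then b else a).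
  apply/setP => -[x|z]; rewrite !inE //=; last by case: ifP.
  by have -> := is_root_setU1 uNw x; rewrite andbC; case: ifP.
have min_surv : tgt_rank ((u, w) |: H) (if src_rank a < src_rank b then a else b) =
    minn (tgt_rank H a) (tgt_rank H b).
  rewrite /tgt_rank !comp_min_inl /minn -fun_if; congr vrank.
  case: ifP => _; rewrite /= KU (cmin_setU1 uNw_K) !linked_img //.
  - by rewrite [linked H _ u]linked_sym cmin_linked.
  - by rewrite [linked H _ w]linked_sym cmin_linked orbT.
have tgt_other : {in comp_roots H, forall t, t != a -> t != b ->
    tgt_rank ((u, w) |: H) t = tgt_rank H t}.
  move=> [x|z] //; rewrite inE /= => /eqP rx xa xb.
  rewrite /tgt_rank /= KU (cmin_setU1 uNw_K) !linked_img //.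
  have [xu|//] := boolP (linked H x u || linked H x w).
  by case/orP: xu => /cmin_eq; rewrite rx => ex; rewrite ?ex eqxx in xa xb.
rewrite /comp_inversions rootsU.
rewrite (odd_inversions_merge (in2W src_rank_inj) (@tgt_rank_inj H) aS bS ab min_surv tgt_other).
by rewrite !sigmaE /= !cidx_src_rank !cidx_tgt_rank.
Qed.

End ComponentInversions.

Section EpsParity.
Local Open Scope nat_scope.

Lemma setU_cons (T : finType) (A : {set T}) x s :
  A :|: [set y in x :: s] = (x |: A) :|: [set y in s].
Proof. by apply/setP => y; rewrite !inE orbA [(y == x) || _]orbC. Qed.

Lemma odd_eps_aux_comp (V1 V2 V3 : finType) (phi : V1 -> V2) (psi : V2 -> V3) s H0 :
  odd (eps_aux (psi \o phi) H0 s) =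
  odd (eps_aux phi H0 s) (+) odd (eps_aux psi (img_edges phi H0) (map (edge_map phi) s)).
Proof.
elim: s H0 => [|e s IHs] H0 //=.
rewrite !oddD IHs img_edgesU1 img_edges_comp /=.
by do 5 case: odd.
Qed.

Lemma odd_eps_aux_id (V : finType) s (H0 : {set V * V}) : odd (eps_aux id H0 s) = false.
Proof. by elim: s H0 => [|e s IHs] H0 //=; rewrite img_edges_id !oddD IHs addbb. Qed.

Section InjectiveMap.
Variables (V' V : finType) (phi : V' -> V).
Hypothesis phi_inj : injective phi.

Lemma odd_eps_aux s (H0 : {set V' * V'}) : uniq s -> [disjoint s & H0] ->
  linear_forest (H0 :|: [set e in s]) ->
  odd (eps_aux phi H0 s) =
  odd (comp_inversions phi H0) (+) odd (comp_inversions phi (H0 :|: [set e in s])).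
Proof.
elim: s H0 => [|[u w] s IHs] H0 /=.
  by move=> _ _ _; rewrite (_ : _ :|: _ = H0) ?addbb //; apply/setP => e; rewrite !inE orbF.
case/andP=> uwNs s_uniq; rewrite disjoint_cons => /andP[uwNH0 sNH0]; rewrite setU_cons => lf.
have uNw : ~~ linked H0 u w.
  apply: linear_forest_setU1_unlinked uwNH0; apply: linear_forest_sub lf.
  exact: subsetUl.
have sNuwH0 : [disjoint s & (u, w) |: H0].
  rewrite disjoint_has; apply/hasPn => e es; rewrite /= in_setU1 (disjointFr sNH0 es) orbF.
  by apply: contraNneq uwNs => <-.
rewrite !oddD (IHs _ s_uniq sNuwH0 lf) /= (odd_sigma_img phi_inj uNw).
by do 3 case: odd.
Qed.

Lemma odd_eps_aux_set0 s (H : {set V' * V'}) :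
  uniq s -> [set e in s] = H -> linear_forest H ->
  odd (eps_aux phi set0 s) =
  odd (comp_inversions phi set0) (+) odd (comp_inversions phi H).
Proof.
move=> s_uniq sH lfH; rewrite odd_eps_aux ?set0U ?sH //.
by rewrite disjoint_has; apply/hasPn => e _; rewrite inE.
Qed.

Lemma odd_eps (H : {set V' * V'}) : linear_forest H ->
  odd (eps phi H) = odd (comp_inversions phi set0) (+) odd (comp_inversions phi H).
Proof. exact: odd_eps_aux_set0 (enum_uniq _) (set_enum H). Qed.

End InjectiveMap.

Lemma odd_eps_comp (V1 V2 V3 : finType) (phi : V1 -> V2) (psi : V2 -> V3)
  (H : {set V1 * V1}) : injective phi -> injective psi -> linear_forest H ->
  odd (eps (psi \o phi) H) = odd (eps phi H) (+) odd (eps psi (img_edges phi H)).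
Proof.
move=> phi_inj psi_inj lfH; have lfK := linear_forest_img phi_inj lfH.
have -> : odd (eps psi (img_edges phi H)) =
    odd (eps_aux psi (img_edges phi set0) (map (edge_map phi) (enum H))).
  rewrite img_edges0 (odd_eps psi_inj lfK) (odd_eps_aux_set0 psi_inj _ _ lfK) //.
    by rewrite map_inj_uniq ?enum_uniq //; apply: edge_map_inj.
  by apply/setP => e; rewrite inE; apply/imageP/imsetP.
exact: odd_eps_aux_comp.
Qed.

Lemma odd_eps_id (V : finType) (H : {set V * V}) : odd (eps id H) = false.
Proof. exact: odd_eps_aux_id. Qed.

End EpsParity.

Lemma sign_odd_eq (R : pzRingType) (m n : nat) : odd m = odd n -> (-1) ^+ m = (-1) ^+ n :> R.
Proof. by move=> e; rewrite -signr_odd e signr_odd. Qed.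

Section Cochains.
Variables (G' G : digraph) (R S : comPzRingType).

Lemma mdiff0 : mdiff (0 : cochain G R) = 0.
Proof.
by apply/ffunP => H; rewrite !ffunE; case: ifP => // _; apply: big1 => e _; rewrite ffunE mulr0.
Qed.

Lemma coboundary0 n : coboundary n (0 : cochain G R).
Proof. by case: n => [|n] //=; exists 0; [move=> H; rewrite ffunE | rewrite mdiff0]. Qed.

Lemma cohom_eq_refl n (x : cochain G R) : cohom_eq n x x.
Proof. by rewrite /cohom_eq subrr; apply: coboundary0. Qed.

Lemma mapc_mdiff (f : {rmorphism R -> S}) (x : cochain G R) :
  mapc f (mdiff x) = mdiff (mapc f x).
Proof.
apply/ffunP => H; rewrite !ffunE; case: ifP => _; last exact: rmorph0.
by rewrite rmorph_sum; apply: eq_bigr => e _; rewrite rmorphMsign ffunE.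
Qed.

Variable phi : vtx G' -> vtx G.
Hypothesis phi_reg : regular phi.

(* Removing an edge [e] from [H'] changes [eps] exactly by the discrepancy
   between [sigma (H' :\ e) e] in [G'] and its image in [G]. *)
Lemma pullc_mdiff (y : cochain G R) : mdiff (pullc phi y) = pullc phi (mdiff y).
Proof.
have phi_inj := phi_reg.1.
apply/ffunP => H'; rewrite !ffunE; case: (boolP (is_multipath H')) => mpH' //.
rewrite (multipath_img phi_reg mpH') img_edgesE (big_imset _ (in2W (edge_map_inj phi_inj))) /=.
rewrite mulr_sumr; apply: eq_bigr => -[u w] uwH'; rewrite ffunE (multipathD1 _ mpH').
rewrite -img_edgesD1 // !mulrA; congr (_ * _); rewrite -!exprD; apply: sign_odd_eq.
have lfH' := multipath_linear_forest mpH'.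
have lfH'D := multipath_linear_forest (multipathD1 (u, w) mpH').
have uwK : (u, w) |: (H' :\ (u, w)) = H' by rewrite setD1K.
have uNw : ~~ linked (H' :\ (u, w)) u w.
  by apply: linear_forest_setU1_unlinked; rewrite ?uwK // setD11.
have := odd_sigma_img phi_inj uNw; rewrite uwK !oddD /=.
rewrite (odd_eps phi_inj lfH') (odd_eps phi_inj lfH'D).
by do 5 case: odd.
Qed.

End Cochains.

Section Bimap.
Variables (G' G : digraph) (R S : comPzRingType).
Variables (phi : vtx G' -> vtx G) (f : {rmorphism R -> S}).

Lemma bimap0 : bimap phi f (0 : cochain G R) = 0.
Proof. by apply/ffunP => H; rewrite !ffunE; case: ifP; rewrite ?ffunE ?rmorph0 ?mulr0. Qed.

Lemma bimapD (x y : cochain G R) : bimap phi f (x + y) = bimap phi f x + bimap phi f y.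
Proof.
by apply/ffunP => H; rewrite !ffunE; case: ifP; rewrite ?addr0 // rmorphD mulrDr.
Qed.

Hypothesis phi_reg : regular phi.

Lemma bimap_mdiff (x : cochain G R) : bimap phi f (mdiff x) = mdiff (bimap phi f x).
Proof. by rewrite /bimap mapc_mdiff pullc_mdiff. Qed.

Lemma bimap_in_degree n (x : cochain G R) : in_degree n x -> in_degree n (bimap phi f x).
Proof.
move=> x_n H; rewrite !ffunE; case: ifP => //= mpH H_n.
rewrite x_n ?rmorph0 ?mulr0 // (multipath_img phi_reg mpH) card_img_edges //.
exact: phi_reg.1.
Qed.

End Bimap.

Lemma bimap_id (G : digraph) (R : comPzRingType) n (x : cochain G R) :
  in_degree n x -> bimap id id x = x.
Proof.
move=> x_n; apply/ffunP => H; rewrite !ffunE; case: ifP => mpH; last by rewrite x_n ?mpH.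
by rewrite -signr_odd odd_eps_id mul1r img_edges_id.
Qed.

Lemma bimap_comp (G1 G2 G3 : digraph) (R S T : comPzRingType)
    (phi : vtx G1 -> vtx G2) (psi : vtx G2 -> vtx G3)
    (f : {rmorphism R -> S}) (g : {rmorphism S -> T}) (x : cochain G3 R) :
  regular phi -> regular psi ->
  bimap (psi \o phi) (g \o f) x = bimap phi g (bimap psi f x).
Proof.
move=> phi_reg psi_reg; apply/ffunP => H; rewrite !ffunE; case: ifP => // mpH.
rewrite (multipath_img phi_reg mpH) rmorphMsign mulrA -exprD img_edges_comp.
congr (_ * _); apply: sign_odd_eq.
by rewrite oddD (odd_eps_comp phi_reg.1 psi_reg.1 (multipath_linear_forest mpH)).
Qed.

Theorem theorem1p3 :
  (* each (phi, f) induces a well-defined degree-preserving group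
     homomorphism H^n_mu(G;R) -> H^n_mu(G';S) *)
  (forall (G' G : digraph) (R S : comPzRingType) (phi : vtx G' -> vtx G)
          (f : {rmorphism R -> S}) (n : nat),
     regular phi ->
     (forall x : cochain G R, cocycle n x -> cocycle n (bimap phi f x)) /\
     (forall x : cochain G R, coboundary n x -> coboundary n (bimap phi f x)) /\
     (forall x y : cochain G R,
        bimap phi f (x + y) = bimap phi f x + bimap phi f y)) /\
  (* identities are sent to identities *)
  (forall (G : digraph) (R : comPzRingType) (n : nat) (x : cochain G R),
     cocycle n x -> cohom_eq n (bimap (@id (vtx G)) (@id R) x) x) /\
  (* compositions are sent to compositions *)
  (forall (G1 G2 G3 : digraph) (R S T : comPzRingType)
          (phi : vtx G1 -> vtx G2) (psi : vtx G2 -> vtx G3)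
          (f : {rmorphism R -> S}) (g : {rmorphism S -> T})
          (n : nat) (x : cochain G3 R),
     regular phi -> regular psi -> cocycle n x ->
     cohom_eq n (bimap (psi \o phi) (g \o f) x) (bimap phi g (bimap psi f x))).
Proof.
split; [|split].
- move=> G' G R S phi f n phi_reg; split; [|split].
  + move=> x [x_n dx0]; split; first exact: bimap_in_degree.
    by rewrite -bimap_mdiff // dx0 bimap0.
  + case: n => [|n] x /=; first by move->; rewrite bimap0.
    case=> y y_n ->; exists (bimap phi f y); first exact: bimap_in_degree.
    exact: bimap_mdiff.
  + exact: bimapD.
- by move=> G R n x [x_n _]; rewrite (bimap_id x_n); apply: cohom_eq_refl.
move=> G1 G2 G3 R S T phi psi f g n x phi_reg psi_reg _.
by rewrite bimap_comp //; apply: cohom_eq_refl.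
Qed.
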